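(* Let $q=2^h$ with $h\equiv 1\pmod 2$, and let $A_{1,3},A_{1,4},A_{2,3},A_{2,4},A_{3,4}\in\mathbb F_{q^4}$ with $(A_{1,3},A_{2,3},A_{3,4})\neq(0,0,0)$. Then the system $$\begin{cases} A_{2,3}u+A_{1,3}v=0\\ A_{2,4}u+A_{1,4}v=0\\ A_{3,4}v+A_{2,4}(u^q+v^{q^2})+A_{2,3}(u^{q^2}+v^{q^2}+v^q)=0\\ A_{3,4}u+A_{1,4}(u^q+v^{q^2})+A_{1,3}(u^{q^2}+v^{q^2}+v^q)=0 \end{cases}$$ has at most $q^2$ solutions $(u,v)\in\mathbb F_{q^4}^2$. *)

From mathcomp Require Import all_boot all_algebra.
Set Implicit Arguments. Unset Strict Implicit. Unset Printing Implicit Defensive.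
Import GRing.Theory.
Local Open Scope ring_scope.

Definition sol_set (F : finFieldType) (q : nat)
    (A13 A14 A23 A24 A34 : F) : {set F * F} :=
  [set p : F * F |
    let u := p.1 in let v := p.2 in
    [&& A23 * u + A13 * v == 0,
        A24 * u + A14 * v == 0,
        A34 * v + A24 * (u ^+ q + v ^+ (q ^ 2)%N)
          + A23 * (u ^+ (q ^ 2)%N + v ^+ (q ^ 2)%N + v ^+ q) == 0 &
        A34 * u + A14 * (u ^+ q + v ^+ (q ^ 2)%N)
          + A13 * (u ^+ (q ^ 2)%N + v ^+ (q ^ 2)%N + v ^+ q) == 0]].

From mathcomp Require Import all_boot all_algebra all_field ring.
Set Implicit Arguments. Unset Strict Implicit. Unset Printing Implicit Defensive.
Import GRing.Theory.
Local Open Scope ring_scope.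

(* The first two equations force every solution onto a line through the
   origin (v = e u, or u = 0), and on that line one of the last two equations
   reads a x + b x^q + c x^(q^2) = 0 in the free coordinate, which has at most
   q^2 roots unless (a, b, c) = 0.  This degeneracy can only occur when
   A13 != 0, and then d = (A23 / A13)^q solves d^q (d + 1) = 1, which has no
   solution in F_(q^4) when h is odd. *)

Section QTrinomial.
Variables (R : idomainType) (q : nat).
Hypothesis q_gt1 : (1 < q)%N.

Definition qtrinomial (a b c : R) : {poly R} :=
  a *: 'X + b *: 'X^q + c *: 'X^(q ^ 2).

Lemma horner_qtrinomial a b c x :
  (qtrinomial a b c).[x] = a * x + b * x ^+ q + c * x ^+ (q ^ 2).
Proof. by rewrite !hornerE. Qed.

Lemma coef_qtrinomial a b c i :
  (qtrinomial a b c)`_i =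
    a * (i == 1)%:R + b * (i == q)%:R + c * (i == q ^ 2)%N%:R.
Proof. by rewrite !coefD !coefZ coefX !coefXn. Qed.

Let q_lt_q2 : (q < q ^ 2)%N.
Proof. by rewrite -mulnn -{1}[q]mul1n ltn_mul2r q_gt1 ltnW. Qed.

Lemma qtrinomial_eq0 a b c :
  (qtrinomial a b c == 0) = ((a, b, c) == (0, 0, 0)).
Proof.
apply/eqP/eqP => [p0 | [-> -> ->]]; last by rewrite /qtrinomial !scale0r !addr0.
have q2_gt1 := ltn_trans q_gt1 q_lt_q2.
have /esym := coef_qtrinomial a b c 1.
have /esym := coef_qtrinomial a b c q.
have /esym := coef_qtrinomial a b c (q ^ 2).
rewrite p0 !coef0 !eqxx !(ltn_eqF q_gt1, ltn_eqF q2_gt1, ltn_eqF q_lt_q2).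
rewrite !(gtn_eqF q_gt1, gtn_eqF q2_gt1, gtn_eqF q_lt_q2).
by rewrite !mulr0 !mulr1 !addr0 !add0r => -> -> ->.
Qed.

Lemma size_qtrinomial a b c : (size (qtrinomial a b c) <= (q ^ 2).+1)%N.
Proof.
apply/leq_sizeP => j lt_q2_j; rewrite coef_qtrinomial.
have lt_q_j := ltn_trans q_lt_q2 lt_q2_j.
by rewrite !gtn_eqF ?(ltn_trans q_gt1 lt_q_j) // !mulr0 !addr0.
Qed.

Lemma max_roots_qtrinomial a b c (rs : seq R) :
  (a, b, c) != (0, 0, 0) -> uniq rs -> all (root (qtrinomial a b c)) rs ->
  (size rs <= q ^ 2)%N.
Proof.
rewrite -qtrinomial_eq0 => p_neq0 rs_uniq rs_roots.
rewrite -ltnS (leq_trans (max_poly_roots p_neq0 rs_roots rs_uniq)) //.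
exact: size_qtrinomial.
Qed.

End QTrinomial.

Lemma card_le_qtrinomial_roots (F : finIdomainType) (T : finType) (q : nat)
    (S : {set T}) (f : T -> F) (a b c : F) :
  (1 < q)%N -> (a, b, c) != (0, 0, 0) -> {in S &, injective f} ->
  (forall x, x \in S -> a * f x + b * f x ^+ q + c * f x ^+ (q ^ 2) = 0) ->
  (#|S| <= q ^ 2)%N.
Proof.
move=> q_gt1 abc_neq0 f_inj S_roots.
rewrite -(card_in_imset f_inj) cardE.
apply: max_roots_qtrinomial abc_neq0 (enum_uniq _) _ => //.
apply/allP => y; rewrite mem_enum => /imsetP[x xS ->].
by rewrite /root horner_qtrinomial S_roots.
Qed.

Lemma in_inj_fst_graph (T1 T2 : Type) (S : {pred T1 * T2}) (g : T1 -> T2) :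
  (forall x, x \in S -> x.2 = g x.1) -> {in S &, injective fst}.
Proof. by move=> Sg [x1 x2] [y1 y2] /Sg /= -> /Sg /= -> /= ->. Qed.

Lemma in_inj_snd_graph (T1 T2 : Type) (S : {pred T1 * T2}) (g : T2 -> T1) :
  (forall x, x \in S -> x.1 = g x.2) -> {in S &, injective snd}.
Proof. by move=> Sg [x1 x2] [y1 y2] /Sg /= -> /Sg /= -> /= ->. Qed.

Lemma pow2_odd_mod3 h : odd h -> (2 ^ h = 2 %[mod 3])%N.
Proof.
move=> h_odd; rewrite -[h]odd_double_half h_odd add1n expnS -mul2n expnM.
by rewrite -modnMmr -modnXm [(2 ^ 2 %% 3)%N]/= exp1n.
Qed.

Section Char2.
Variable R : comNzRingType.
Hypothesis charR : 2%N \in [pchar R].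

Lemma exprD_pow2_pchar2 k (x y : R) :
  (x + y) ^+ (2 ^ k) = x ^+ (2 ^ k) + y ^+ (2 ^ k).
Proof. by rewrite exprDn_pchar // (eq_pnat _ (pcharf_eq charR)) pnatX pnat_id. Qed.

(* In characteristic 2 the Moebius map t |-> 1 / (t + 1) has order 3. *)
Lemma mobius_order3_pchar2 (x y z w : R) :
  y * (x + 1) = 1 -> z * (y + 1) = 1 -> w * (z + 1) = 1 -> w = x.
Proof.
move=> xy yz zw; have two0 := addrr_pchar2 charR (1 : R).
have zx : z * x + x - 1 = 0.
  transitivity ((x + 1) * (z * (y + 1) - 1) - z * (y * (x + 1) - 1)
                + (x - z) * (1 + 1)); first by ring.
  by rewrite xy yz two0 !subrr !mulr0 subr0 addr0.
apply/eqP; rewrite -subr_eq0; apply/eqP.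
transitivity (- w * (z * x + x - 1) + x * (w * (z + 1) - 1)); first by ring.
by rewrite zx zw subrr !mulr0 addr0.
Qed.

Lemma expr_pow2_odd_F4 h (x : R) :
  odd h -> x ^+ 2 = x + 1 -> x ^+ (2 ^ h) = x ^+ 2.
Proof.
move=> h_odd x2; have x3 : x ^+ 3 = 1.
  by rewrite exprS x2 mulrDr mulr1 -expr2 x2 addrAC addrr_pchar2 // add0r.
by rewrite -(expr_mod _ x3) pow2_odd_mod3.
Qed.

End Char2.

Section FieldOfOrderQ4.
Variables (F : finFieldType) (h : nat).
Hypothesis cardF : #|F| = ((2 ^ h) ^ 4)%N.

Lemma pchar2_card_pow2 : 2%N \in [pchar F].
Proof. by apply: (@card_finPcharP _ 2 (h * 4)); rewrite // cardF expnM. Qed.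

(* Frobenius maps each Moebius relation d^q = 1 / (d + 1) to the next one;
   since it has order dividing 4 and the Moebius map has order 3, d^q = d,
   so d lies in F_4, where x^q = x^2 for odd h. *)
Lemma exprq_mul_add1_neq1 (d : F) :
  odd h -> d ^+ (2 ^ h) * (d + 1) != 1.
Proof.
move=> h_odd; apply/eqP => root_d; set q := (2 ^ h)%N in root_d.
have charF := pchar2_card_pow2.
have frob (x y : F) : y * (x + 1) = 1 -> y ^+ q * (x ^+ q + 1) = 1.
  by move/(congr1 (fun t => t ^+ q)); rewrite exprMn exprD_pow2_pchar2 // !expr1n.
have dq_d : d ^+ q = d.
  have frob3_d := mobius_order3_pchar2 charF root_d (frob _ _ root_d)
                     (frob _ _ (frob _ _ root_d)).
  by rewrite -{2}(expf_card d) cardF -/q !expnS expn0 muln1 !exprM frob3_d.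
have d2 : d ^+ 2 = d + 1.
  move: root_d; rewrite dq_d mulrDr mulr1 -expr2 => /(canRL (addrK d)).
  by rewrite oppr_pchar2 // addrC.
have := expr_pow2_odd_F4 charF h_odd d2; rewrite -/q dq_d d2.
by rewrite -{1}[d]addr0 => /addrI /eqP; rewrite eq_sym oner_eq0.
Qed.

End FieldOfOrderQ4.

Lemma solve_linear_pchar2 (K : fieldType) (a b x y : K) :
  2%N \in [pchar K] -> a != 0 -> b * x + a * y = 0 -> y = b / a * x.
Proof.
move=> charK a_neq0 /eqP; rewrite addr_eq0 oppr_pchar2 // => /eqP bx_ay.
by rewrite mulrAC bx_ay mulrC mulKf.
Qed.

Section SolutionSet.
Variables (F : finFieldType) (q : nat).
Hypotheses (q_gt1 : (1 < q)%N) (charF : 2%N \in [pchar F]).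
Variables A13 A14 A23 A24 A34 : F.
Local Notation S := (sol_set q A13 A14 A23 A24 A34).

Let expr0q : (0 : F) ^+ q = 0.
Proof. by rewrite expr0n gtn_eqF // ltnW. Qed.

Let expr0q2 : (0 : F) ^+ (q ^ 2) = 0.
Proof. by rewrite expr0n expn_eq0 gtn_eqF // ltnW. Qed.

Lemma card_sol_set_A13 :
  (forall d : F, d ^+ q * (d + 1) != 1) -> A13 != 0 -> (#|S| <= q ^ 2)%N.
Proof.
move=> no_root A13_neq0; set c := A23 / A13.
have snd_line x : x \in S -> x.2 = c * x.1.
  case: x => u v; rewrite inE => /and4P[/eqP eq1 _ _ _].
  exact: solve_linear_pchar2 charF A13_neq0 eq1.
apply: (@card_le_qtrinomial_roots _ _ _ _ fst A34 (A14 + A13 * c ^+ q)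
          (A14 * c ^+ (q ^ 2) + A13 + A13 * c ^+ (q ^ 2))) => //.
- rewrite !xpair_eqE; apply/negP => /andP[/andP[_ /eqP b0] /eqP c0].
  set d := c ^+ q in b0; have cq2 : c ^+ (q ^ 2) = d ^+ q by rewrite -exprM mulnn.
  have A14_A13d : A14 = A13 * d.
    by move/eqP: b0; rewrite addr_eq0 oppr_pchar2 // => /eqP.
  have : A13 * (d ^+ q * (d + 1) + 1) = 0 by rewrite -c0 cq2 A14_A13d; ring.
  move/eqP; rewrite mulf_eq0 (negPf A13_neq0) addr_eq0 oppr_pchar2 //.
  exact/negP/no_root.
- exact: in_inj_fst_graph snd_line.
- move=> [u v] uvS; have /= v_cu := snd_line _ uvS.
  move: uvS; rewrite inE v_cu => /and4P[_ _ _ /eqP eq4].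
  by rewrite -[X in _ = X]eq4 /= !exprMn; ring.
Qed.

Lemma card_sol_set_A23 : A13 = 0 -> A23 != 0 -> (#|S| <= q ^ 2)%N.
Proof.
move=> A13_0 A23_neq0.
have fst_eq0 x : x \in S -> x.1 = 0.
  case: x => u v; rewrite inE /= A13_0 mul0r addr0 => /and4P[/eqP A23u _ _ _].
  by move/eqP: A23u; rewrite mulf_eq0 (negPf A23_neq0) => /eqP.
apply: (@card_le_qtrinomial_roots _ _ _ _ snd A34 A23 (A24 + A23)) => //.
- by rewrite !xpair_eqE (negPf A23_neq0) andbF.
- exact: (in_inj_snd_graph (g := fun=> 0)).
- move=> [u v] uvS; have /= u0 := fst_eq0 _ uvS.
  move: uvS; rewrite inE u0 => /and4P[_ _ /eqP eq3 _].
  by rewrite -[X in _ = X]eq3 /= expr0q expr0q2 !add0r; ring.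
Qed.

Lemma card_sol_set_A34 :
  A13 = 0 -> A23 = 0 -> A34 != 0 -> (#|S| <= q ^ 2)%N.
Proof.
move=> A13_0 A23_0 A34_neq0.
have A34_nz (b c : F) : (A34, b, c) != (0, 0, 0).
  by rewrite !xpair_eqE (negPf A34_neq0).
have [A14_0 | A14_neq0] := eqVneq A14 0.
  have fst_eq0 x : x \in S -> x.1 = 0.
    case: x => u v; rewrite inE /= A13_0 A14_0 !mul0r !addr0 => /and4P[_ _ _].
    by rewrite mulf_eq0 (negPf A34_neq0) => /eqP.
  apply: (@card_le_qtrinomial_roots _ _ _ _ snd _ _ _ q_gt1 (A34_nz 0 A24)).
    exact: (in_inj_snd_graph (g := fun=> 0)).
  move=> [u v] uvS; have /= u0 := fst_eq0 _ uvS.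
  move: uvS; rewrite inE u0 A23_0 => /and4P[_ _ /eqP eq3 _].
  by rewrite -[X in _ = X]eq3 /= expr0q; ring.
set e := A24 / A14.
have snd_line x : x \in S -> x.2 = e * x.1.
  case: x => u v; rewrite inE => /and4P[_ /eqP eq2 _ _].
  exact: solve_linear_pchar2 charF A14_neq0 eq2.
apply: (@card_le_qtrinomial_roots _ _ _ _ fst _ _ _ q_gt1
          (A34_nz A14 (A14 * e ^+ (q ^ 2)))).
  exact: in_inj_fst_graph snd_line.
move=> [u v] uvS; have /= v_eu := snd_line _ uvS.
move: uvS; rewrite inE v_eu A13_0 => /and4P[_ _ _ /eqP eq4].
by rewrite -[X in _ = X]eq4 /= !exprMn; ring.
Qed.

Lemma card_sol_set_le :
  (forall d : F, d ^+ q * (d + 1) != 1) -> (A13, A23, A34) != (0, 0, 0) ->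
  (#|S| <= q ^ 2)%N.
Proof.
move=> no_root A_neq0.
have [A13_0 | A13_neq0] := eqVneq A13 0; last exact: card_sol_set_A13.
have [A23_0 | A23_neq0] := eqVneq A23 0; last exact: card_sol_set_A23.
by apply: card_sol_set_A34; move: A_neq0; rewrite A13_0 A23_0 !xpair_eqE !eqxx.
Qed.

End SolutionSet.

Theorem proposition4p4 (F : finFieldType) (h : nat) (hodd : odd h)
    (hF : #|F| = ((2 ^ h) ^ 4)%N)
    (A13 A14 A23 A24 A34 : F)
    (hA : (A13, A23, A34) != (0, 0, 0)) :
  (#|sol_set (2 ^ h) A13 A14 A23 A24 A34| <= (2 ^ h) ^ 2)%N.
Proof.
have q_gt1 : (1 < 2 ^ h)%N by rewrite -{1}(expn0 2) ltn_exp2l // lt0n; case: h hodd {hF}.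
apply: card_sol_set_le q_gt1 (pchar2_card_pow2 hF) _ _ _ _ _ _ hA => d.
exact: exprq_mul_add1_neq1 hF d hodd.
Qed.
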